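(* Let $(\Gamma,m)$ be a smooth closed Riemannian manifold and $\mathcal{M}\subset\mathbb{R}^{n+1}$ an orientable smooth closed hypersurface. Let $\mathcal{N}_T$ be a tubular neighbourhood of $\mathcal{M}$ of fixed width such that each $x\in\mathcal{N}_T$ has a unique decomposition $x=a(x)+d(x)Dd(x)$ with $a(x)\in\mathcal{M}$, $d$ being the signed distance function to $\mathcal{M}$, and let $G(x)=\mathrm{Id}-2d(x)D^2d(x)+2d(x)^2D^2d(x)D^2d(x)$ on $\mathcal{N}_T$. Let $f:\Gamma\to\mathcal{N}_T$ be differentiable. Then $$m(\mathrm{grad}_mf^\alpha,\mathrm{grad}_mf^\beta)\,(\nabla^G_\alpha\nabla^G_\beta d)\circ f=m(\mathrm{grad}_mf^\alpha,\mathrm{grad}_mf^\beta)\,d\circ f\,\big(D_\alpha D_\rho d\,D_\beta D_\rho d\big)\circ f.$$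
   Context: Summation over repeated Greek indices $1,\dots,n+1$ (Euclidean coordinates). $d$ is the signed distance ($\operatorname{dist}(x,\mathcal{M})$ outside the bounded region enclosed by $\mathcal{M}$, minus the distance inside), smooth on $\mathcal{N}_T$ with $|Dd|=1$. $D_\alpha$ are Euclidean partial derivatives. $\nabla^G_\alpha\nabla^G_\beta d=D_\alpha D_\beta d-\Gamma(G)^\gamma_{\alpha\beta}D_\gamma d$ is the Hessian of $d$ w.r.t. $G$, with $\Gamma(G)$ the Christoffel symbols of $G$. *)

(* Ambient space R^(n+1) = 'rV[R]_(n.+1), R : realType. *)
From HB Require Import structures.
From mathcomp Require Import all_boot all_order all_algebra.
From mathcomp Require Import all_classical all_reals all_analysis.
Set Implicit Arguments. Unset Strict Implicit. Unset Printing Implicit Defensive.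
Import Order.TTheory GRing.Theory Num.Theory numFieldNormedType.Exports.
Local Open Scope classical_set_scope.
Local Open Scope ring_scope.

Section Defs.
Variable R : realType.

(* Euclidean norm (the library norm on 'rV is the sup norm) *)
Definition eucl_norm (m : nat) (x : 'rV[R]_m) : R :=
  Num.sqrt (\sum_(i < m) x ord0 i ^+ 2).

Definition set_dist (m : nat) (x : 'rV[R]_m) (M : set 'rV[R]_m) : R :=
  inf [set eucl_norm (x - a) | a in M].

(* bounded region enclosed by M: points off M whose component of the complement is bounded *)
Definition inside (m : nat) (M : set 'rV[R]_m) (x : 'rV[R]_m) : Prop :=
  ~ M x /\ bounded_set (connected_component (~` M) x).

Definition sdist (m : nat) (M : set 'rV[R]_m) (x : 'rV[R]_m) : R :=
  if `[< inside M x >] then - set_dist x M else set_dist x M.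

Definition partial (m : nat) (i : 'I_m) (f : 'rV[R]_m -> R) : 'rV[R]_m -> R :=
  fun x => 'D_(delta_mx 0 i) f x.

Definition iter_partial (m : nat) (s : seq 'I_m) (f : 'rV[R]_m -> R) :=
  foldr (fun i g => partial i g) f s.

Definition smooth_on (m : nat) (U : set 'rV[R]_m) (f : 'rV[R]_m -> R) : Prop :=
  forall (s : seq 'I_m) x, U x -> differentiable (iter_partial s f) x.

Definition gradient (m : nat) (f : 'rV[R]_m -> R) (x : 'rV[R]_m) : 'rV[R]_m :=
  \row_i partial i f x.

Definition local_def (m : nat) (M : set 'rV[R]_m) (p : 'rV[R]_m)
    (V : set 'rV[R]_m) (phi : 'rV[R]_m -> R) : Prop :=
  [/\ open V, V p, smooth_on V phi,
      (forall x, V x -> gradient phi x != 0) &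
      M `&` V = [set x | V x /\ phi x = 0]].

(* smooth closed (compact, boundaryless, embedded) hypersurface *)
Definition closed_hypersurface (m : nat) (M : set 'rV[R]_m) : Prop :=
  [/\ compact M, M !=set0 &
      forall p, M p -> exists V phi, local_def M p V phi].

Definition orientable_hypersurface (m : nat) (M : set 'rV[R]_m) : Prop :=
  exists nu : 'rV[R]_m -> 'rV[R]_m,
    {within M, continuous nu} /\
    forall p, M p -> eucl_norm (nu p) = 1 /\
      forall V phi, local_def M p V phi -> exists c : R, nu p = c *: gradient phi p.

Definition hess (m : nat) (d : 'rV[R]_m -> R) (x : 'rV[R]_m) : 'M[R]_m :=
  \matrix_(i, j) partial i (partial j d) x.

Definition Gmet (m : nat) (d : 'rV[R]_m -> R) (x : 'rV[R]_m) : 'M[R]_m :=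
  1%:M - (2 * d x) *: hess d x + (2 * d x ^+ 2) *: (hess d x *m hess d x).

Definition christoffel (m : nat) (d : 'rV[R]_m -> R) (c a b : 'I_m)
    (x : 'rV[R]_m) : R :=
  2^-1 * \sum_(mu < m) invmx (Gmet d x) c mu *
    (partial a (fun y => Gmet d y mu b) x + partial b (fun y => Gmet d y mu a) x
     - partial mu (fun y => Gmet d y a b) x).

Definition hessG (m : nat) (d : 'rV[R]_m -> R) (a b : 'I_m) (x : 'rV[R]_m) : R :=
  partial a (partial b d) x - \sum_(c < m) christoffel d c a b x * partial c d x.

(* Riemannian data of Gamma in a local chart: metric matrix g(y) *)
Definition riem_grad (k : nat) (g : 'rV[R]_k -> 'M[R]_k) (h : 'rV[R]_k -> R)
    (y : 'rV[R]_k) : 'rV[R]_k :=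
  gradient h y *m invmx (g y).

Definition riem_inner (k : nat) (g : 'rV[R]_k -> 'M[R]_k) (y : 'rV[R]_k)
    (u v : 'rV[R]_k) : R :=
  (u *m g y *m v^T) ord0 ord0.

End Defs.

(* Since |Dd| = 1 on the tube, differentiating once gives D^2 d Dd = 0 and
   differentiating again gives D^3 d (e_k, e_j, Dd) = - (D^2 d D^2 d)_kj.  The
   first identity gives G Dd = Dd, hence Dd^T G^-1 = Dd^T, so the contraction
   Gamma(G)^c_ab D_c d reduces to (1/2) D_mu d (D_a G_mu,b + D_b G_mu,a - D_mu G_ab).
   Expanding D G with both identities, this equals D^2 d - d (D^2 d)^2, so that
   nabla^G_a nabla^G_b d = d (D^2 d D^2 d)_ab at every point of the tube; the
   theorem follows by contracting with m(grad f^a, grad f^b). *)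

From HB Require Import structures.
From mathcomp Require Import all_boot all_order all_algebra.
From mathcomp Require Import all_classical all_reals all_analysis.
From mathcomp Require Import ring lra.
Import Order.TTheory GRing.Theory Num.Theory numFieldNormedType.Exports.
Local Open Scope classical_set_scope.
Local Open Scope ring_scope.

Section Schwarz.
Context {R : realType} {V : normedModType R}.
Implicit Types (phi : V -> R) (u v w x c : V).

Lemma is_derive_line phi v c t0 :
  derivable phi (t0 *: v + c) v ->
  is_derive t0 1 (fun t : R => phi (t *: v + c)) ('D_v phi (t0 *: v + c)).
Proof.
have quotE : (fun h : R => h^-1 *: (((fun t => phi (t *: v + c)) \o shift t0) (h *: 1)
                                    - phi (t0 *: v + c)))
  = (fun h : R => h^-1 *: ((phi \o shift (t0 *: v + c)) (h *: v) - phi (t0 *: v + c))).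
  by apply/funext => h /=; rewrite [h *: 1]mulr1 scalerDl addrA.
by split; rewrite /derivable /derive quotE.
Qed.

Lemma MVT_0 (f df : R -> R) (h : R) : 0 < h ->
  (forall t, 0 <= t <= h -> is_derive t 1 f (df t)) ->
  exists2 c, 0 <= c <= h & f h - f 0 = df c * h.
Proof.
move=> h_gt0 fdf.
have [c] : exists2 c, c \in `]0, h[ & f h - f 0 = df c * (h - 0).
  apply: MVT => // [t|].
    by rewrite in_itv /= => /andP[t0 th]; apply: fdf; rewrite !ltW.
  apply: derivable_within_continuous => t; rewrite in_itv /= => ht.
  by have [] := fdf t ht.
by rewrite in_itv /= subr0 => /andP[c0 ch] ->; exists c; rewrite ?ltW.
Qed.

Lemma second_difference_MVT phi u w x (h : R) : 0 < h ->
  (forall s t, 0 <= s <= h -> 0 <= t <= h ->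
     differentiable phi (s *: u + t *: w + x) /\
     differentiable ('D_u phi) (s *: u + t *: w + x)) ->
  exists s t, [/\ 0 <= s <= h, 0 <= t <= h &
    phi (h *: u + h *: w + x) - phi (h *: u + x) - phi (h *: w + x) + phi x
      = h ^+ 2 * 'D_w ('D_u phi) (s *: u + t *: w + x)].
Proof.
move=> h_gt0 dphi.
have hh : 0 <= h <= h by rewrite lexx ltW.
have h0 : (0 : R) <= 0 <= h by rewrite lexx ltW.
pose gu t := phi (t *: u + (h *: w + x)) - phi (t *: u + x).
have [s hs gsE] : exists2 s, 0 <= s <= h & gu h - gu 0 =
    ('D_u phi (s *: u + (h *: w + x)) - 'D_u phi (s *: u + x)) * h.
  apply: MVT_0 => [//|t ht]; apply: is_deriveB; apply/is_derive_line/diff_derivable.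
    by have [] := dphi t h ht hh; rewrite addrA.
  by have [] := dphi t 0 ht h0; rewrite scale0r addr0.
pose gw t := 'D_u phi (t *: w + (s *: u + x)).
have [t ht gwE] : exists2 t, 0 <= t <= h & gw h - gw 0 =
    'D_w ('D_u phi) (t *: w + (s *: u + x)) * h.
  apply: MVT_0 => [//|t' ht']; apply/is_derive_line/diff_derivable.
  by have [_] := dphi s t' hs ht'; rewrite addrCA addrA.
exists s, t; split => //.
have -> : phi (h *: u + h *: w + x) - phi (h *: u + x) - phi (h *: w + x) + phi x
    = gu h - gu 0 by rewrite /gu scale0r !add0r addrA; ring.
rewrite gsE.
have -> : 'D_u phi (s *: u + (h *: w + x)) - 'D_u phi (s *: u + x) = gw h - gw 0.
  by rewrite /gw scale0r add0r addrCA.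
by rewrite gwE addrCA addrA; ring.
Qed.

Lemma norm_scaleD_lt (p q : V) (s t r : R) : 0 < r ->
  0 <= s <= r / (2 * (`|p| + `|q| + 1)) -> 0 <= t <= r / (2 * (`|p| + `|q| + 1)) ->
  `|s *: p + t *: q| < r.
Proof.
move=> r_gt0 /andP[s0 sh] /andP[t0 th].
set C := `|p| + `|q| + 1 in sh th.
have C_gt0 : 0 < C by rewrite /C ltr_pwDr // addr_ge0.
set h := r / (2 * C) in sh th.
have hC : h * C = r / 2.
  by rewrite /h invfM mulrA -mulrA mulVf ?mulr1 // gt_eqF.
apply: le_lt_trans (ler_normD _ _) _.
rewrite !normrZ (ger0_norm s0) (ger0_norm t0).
have h_ge0 : 0 <= h by exact: le_trans sh.
apply: (@le_lt_trans _ _ (h * (`|p| + `|q|))).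
  by rewrite mulrDr; apply: lerD; apply: ler_wpM2r.
apply: (@le_lt_trans _ _ (h * C)); first by rewrite ler_wpM2l // lerDl.
by rewrite hC; lra.
Qed.

Lemma schwarz (O : set V) phi u w x : open O -> O x ->
  (forall z, O z -> [/\ differentiable phi z, differentiable ('D_u phi) z
                       & differentiable ('D_w phi) z]) ->
  {for x, continuous ('D_w ('D_u phi))} -> {for x, continuous ('D_u ('D_w phi))} ->
  'D_w ('D_u phi) x = 'D_u ('D_w phi) x.
Proof.
move=> oO Ox dphi cA cB.
set A := 'D_w ('D_u phi) in cA *; set B := 'D_u ('D_w phi) in cB *.
have [//|neqAB] := eqVneq (A x) (B x); exfalso.
pose eps := `|A x - B x| / 2.
have eps_gt0 : 0 < eps by rewrite divr_gt0 // normr_gt0 subr_eq0.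
pose W := O `&` ([set z | `|A x - A z| < eps] `&` [set z | `|B x - B z| < eps]).
have [r /= r_gt0 ballW] : exists2 r : R, 0 < r & ball x r `<=` W.
  apply/nbhs_ballP; apply: filterI; first exact: open_nbhs_nbhs.
  by apply: filterI; [exact: cvgr_dist_lt cA _ eps_gt0|exact: cvgr_dist_lt cB _ eps_gt0].
pose h := r / (2 * (`|u| + `|w| + 1)).
have h_gt0 : 0 < h by rewrite divr_gt0 // mulr_gt0 // ltr_pwDr // addr_ge0.
have W_near p q s t : `|p| + `|q| = `|u| + `|w| -> 0 <= s <= h -> 0 <= t <= h ->
    W (s *: p + t *: q + x).
  move=> pqE hs ht; apply: ballW; rewrite -ball_normE /= opprD addrCA subrr addr0 normrN.
  by apply: norm_scaleD_lt; rewrite // pqE.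
have [s1 [t1 [hs1 ht1 E1]]] := @second_difference_MVT phi u w x h h_gt0 (fun s t hs ht =>
  let: And3 d1 d2 _ := dphi _ (W_near u w s t erefl hs ht).1 in conj d1 d2).
have [s2 [t2 [hs2 ht2 E2]]] := @second_difference_MVT phi w u x h h_gt0 (fun s t hs ht =>
  let: And3 d1 _ d3 := dphi _ (W_near w u s t (addrC _ _) hs ht).1 in conj d1 d3).
(* Both mixed partials equal the same second difference over h^2, taken at
   points where they are eps-close to their values at x. *)
have h2_neq0 : h ^+ 2 != 0 by rewrite expf_neq0 // gt_eqF.
have AB : A (s1 *: u + t1 *: w + x) = B (s2 *: w + t2 *: u + x).
  apply: (mulfI h2_neq0); rewrite -[LHS]E1 -[RHS]E2 [h *: w + h *: u]addrC.
  by congr (_ + _); exact: addrAC.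
have [_ [A_near _]] := W_near u w s1 t1 erefl hs1 ht1.
have [_ [_ B_near]] := W_near w u s2 t2 (addrC _ _) hs2 ht2.
have : `|A x - B x| < eps + eps.
  apply: le_lt_trans (ltrD A_near B_near); rewrite AB.
  by apply: le_trans (ler_normB _ _); rewrite opprB addrA subrK.
by rewrite -splitr ltxx.
Qed.

End Schwarz.

Lemma is_derive_sum_pt (R : numFieldType) (V : normedModType R) n
    (F : 'I_n -> V -> R) (dF : 'I_n -> R) (x v : V) :
  (forall i, is_derive x v (F i) (dF i)) ->
  is_derive x v (fun z => \sum_(i < n) F i z) (\sum_(i < n) dF i).
Proof. by move=> dF_F; have := is_derive_sum dF_F; rewrite fct_sumE. Qed.

Section Partial.
Context {R : realType} {m : nat}.
Implicit Types (O : set 'rV[R]_m) (phi f g : 'rV[R]_m -> R) (x z : 'rV[R]_m).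

Lemma smooth_on_partial {O phi} j : smooth_on O phi -> smooth_on O (partial j phi).
Proof.
move=> phi_smooth s z Oz; have := phi_smooth (rcons s j) z Oz.
by rewrite /iter_partial -cats1 foldr_cat.
Qed.

Lemma smooth_on_differentiable {O phi z} : smooth_on O phi -> O z -> differentiable phi z.
Proof. by move=> phi_smooth Oz; exact: phi_smooth [::] z Oz. Qed.

Lemma is_derive_partial {phi x} j :
  differentiable phi x -> is_derive x (delta_mx 0 j) phi (partial j phi x).
Proof. by move=> dphi; apply/derivableP/diff_derivable. Qed.

Lemma partialC {O phi} i j {x} : open O -> smooth_on O phi -> O x ->
  partial i (partial j phi) x = partial j (partial i phi) x.
Proof.
move=> oO phi_smooth Ox.
have C2 k l : differentiable (partial k (partial l phi)) x.
  exact: smooth_on_differentiable (smooth_on_partial k (smooth_on_partial l phi_smooth)) Ox.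
apply: (schwarz O phi (delta_mx 0 j) (delta_mx 0 i) x oO Ox).
- move=> z Oz; split; apply: (smooth_on_differentiable _ Oz) => //;
    exact: smooth_on_partial.
- exact: differentiable_continuous (C2 i j).
- exact: differentiable_continuous (C2 j i).
Qed.

Lemma partial_cst (c : R) j x : partial j (fun=> c) x = 0.
Proof. exact: derive_cst. Qed.

Lemma partial_eq_on {O f g} k {x} : open O -> O x -> (forall z, O z -> f z = g z) ->
  partial k f x = partial k g x.
Proof.
move=> oO Ox fg; apply: near_eq_derive.
by apply: filterS (open_nbhs_nbhs (conj oO Ox)).
Qed.

End Partial.

Section UnitGradient.
Context {R : realType} {m : nat} {O : set 'rV[R]_m} {d : 'rV[R]_m -> R}.
Hypotheses (oO : open O) (d_smooth : smooth_on O d)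
  (d_unit : forall z, O z -> \sum_(i < m) partial i d z * partial i d z = 1).

Lemma hess_gradient_eq0 j z : O z ->
  \sum_(i < m) partial i d z * partial j (partial i d) z = 0.
Proof.
move=> Oz.
have dp i : differentiable (partial i d) z.
  exact: smooth_on_differentiable (smooth_on_partial i d_smooth) Oz.
have D : partial j (fun w => \sum_(i < m) partial i d w * partial i d w) z
    = \sum_(i < m) (partial i d z * partial j (partial i d) z
                   + partial i d z * partial j (partial i d) z).
  apply: derive_val; apply: is_derive_sum_pt => i.
  exact: is_deriveM (is_derive_partial j (dp i)) (is_derive_partial j (dp i)).
move: D; rewrite (partial_eq_on j oO Oz d_unit) partial_cst big_split /= -mulr2n.
by move/esym/eqP; rewrite mulrn_eq0 => /eqP.
Qed.

Lemma partial_hess_gradient_eq0 k j x : O x ->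
  \sum_(i < m) (partial i d x * partial k (partial j (partial i d)) x
                + partial j (partial i d) x * partial k (partial i d) x) = 0.
Proof.
move=> Ox.
have dp i : differentiable (partial i d) x.
  exact: smooth_on_differentiable (smooth_on_partial i d_smooth) Ox.
have dH i : differentiable (partial j (partial i d)) x.
  exact: smooth_on_differentiable
    (smooth_on_partial j (smooth_on_partial i d_smooth)) Ox.
have <- : partial k (fun w => \sum_(i < m) partial i d w * partial j (partial i d) w) x
    = \sum_(i < m) (partial i d x * partial k (partial j (partial i d)) x
                + partial j (partial i d) x * partial k (partial i d) x).
  apply: derive_val; apply: is_derive_sum_pt => i.
  exact: is_deriveM (is_derive_partial k (dp i)) (is_derive_partial k (dH i)).
by rewrite (partial_eq_on k oO Ox (hess_gradient_eq0 j)) partial_cst.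
Qed.

End UnitGradient.

(* At a point x: [p], [H], [T] stand for Dd, D^2 d, D^3 d, [d0] for d x, and
   [dGmet a mu b] for D_a G_(mu,b). *)
Section ChristoffelAlgebra.
Context {R : numFieldType} {n : nat}.
Variables (p : 'I_n -> R) (H : 'I_n -> 'I_n -> R) (T : 'I_n -> 'I_n -> 'I_n -> R).
Variable d0 : R.

Definition dGmet a mu b : R :=
  -2 * (p a * H mu b + d0 * T a mu b) +
  2 * (2 * d0 * p a * (\sum_(nu < n) H mu nu * H nu b) +
       d0 ^+ 2 * \sum_(nu < n) (H mu nu * T a nu b + H nu b * T a mu nu)).

Definition Hsq a b := \sum_(i < n) H a i * H b i.

Definition Hcube a b := \sum_(nu < n) Hsq a nu * H nu b.

Lemma sum_mul_sumr (A : 'I_n -> 'I_n -> R) (X : 'I_n -> R) :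
  \sum_(mu < n) p mu * (\sum_(nu < n) A mu nu * X nu)
  = \sum_(nu < n) (\sum_(mu < n) p mu * A mu nu) * X nu.
Proof.
under eq_bigr do rewrite mulr_sumr.
rewrite exchange_big /=; apply: eq_bigr => nu _.
by rewrite mulr_suml; apply: eq_bigr => mu _; rewrite mulrA.
Qed.

Lemma sum_mul_suml (A : 'I_n -> 'I_n -> R) (X : 'I_n -> R) :
  \sum_(mu < n) p mu * (\sum_(nu < n) X nu * A mu nu)
  = \sum_(nu < n) X nu * (\sum_(mu < n) p mu * A mu nu).
Proof.
under eq_bigr do under eq_bigr do rewrite mulrC.
by rewrite sum_mul_sumr; apply: eq_bigr => nu _; rewrite mulrC.
Qed.

Hypotheses (H_sym : forall i j, H i j = H j i)
  (T_sym12 : forall k i j, T k i j = T k j i)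
  (T_sym01 : forall k i j, T k i j = T i k j)
  (p_unit : \sum_(i < n) p i * p i = 1)
  (Hp_eq0 : forall j, \sum_(i < n) p i * H j i = 0)
  (Tp_eq0 : forall k j, \sum_(i < n) (p i * T k j i + H j i * H k i) = 0).

Lemma Hsq_sym a b : Hsq a b = Hsq b a.
Proof. by apply: eq_bigr => i _; rewrite mulrC. Qed.

Lemma pH_eq0 j : \sum_(mu < n) p mu * H mu j = 0.
Proof. by rewrite -[RHS](Hp_eq0 j); apply: eq_bigr => i _; rewrite H_sym. Qed.

Lemma pT_mid a b : \sum_(mu < n) p mu * T a mu b = - Hsq a b.
Proof.
apply/eqP; rewrite -addr_eq0 -[X in _ == X](Tp_eq0 a b) big_split /=.
apply/eqP; congr (_ + _); apply: eq_bigr => i _; first by rewrite T_sym12.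
by rewrite mulrC.
Qed.

Lemma pT_first a b : \sum_(mu < n) p mu * T mu a b = - Hsq a b.
Proof. by rewrite -pT_mid; apply: eq_bigr => i _; rewrite T_sym01. Qed.

Lemma sum_pH_mul (X : 'I_n -> R) :
  \sum_(nu < n) (\sum_(mu < n) p mu * H mu nu) * X nu = 0.
Proof. by apply: big1 => nu _; rewrite pH_eq0 mul0r. Qed.

Lemma sum_p_dGmet_mid a b :
  \sum_(mu < n) p mu * dGmet a mu b = 2 * d0 * Hsq a b - 2 * d0 ^+ 2 * Hcube a b.
Proof.
have -> : \sum_(mu < n) p mu * dGmet a mu b =
    (- 2 * p a) * (\sum_(mu < n) p mu * H mu b)
    + (- 2 * d0) * (\sum_(mu < n) p mu * T a mu b)
    + 4 * d0 * p a * (\sum_(mu < n) p mu * (\sum_(nu < n) H mu nu * H nu b))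
    + 2 * d0 ^+ 2 * (\sum_(mu < n) p mu * (\sum_(nu < n) H mu nu * T a nu b))
    + 2 * d0 ^+ 2 * (\sum_(mu < n) p mu * (\sum_(nu < n) H nu b * T a mu nu)).
  rewrite !mulr_sumr -!big_split /=; apply: eq_bigr => mu _.
  by rewrite /dGmet big_split /=; ring.
rewrite pH_eq0 pT_mid sum_mul_suml !sum_mul_sumr !sum_pH_mul.
have -> : \sum_(nu < n) H nu b * (\sum_(mu < n) p mu * T a mu nu) = - Hcube a b.
  by rewrite -sumrN; apply: eq_bigr => nu _; rewrite pT_mid mulrN mulrC.
ring.
Qed.

Lemma sum_p_dGmet_first a b :
  \sum_(mu < n) p mu * dGmet mu a b =
  - 2 * H a b + 6 * d0 * Hsq a b - 2 * d0 ^+ 2 * (Hcube a b + Hcube b a).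
Proof.
have -> : \sum_(mu < n) p mu * dGmet mu a b =
    (- 2 * H a b) * (\sum_(mu < n) p mu * p mu)
    + (- 2 * d0) * (\sum_(mu < n) p mu * T mu a b)
    + 4 * d0 * (\sum_(nu < n) H a nu * H nu b) * (\sum_(mu < n) p mu * p mu)
    + 2 * d0 ^+ 2 * (\sum_(mu < n) p mu * (\sum_(nu < n) H a nu * T mu nu b))
    + 2 * d0 ^+ 2 * (\sum_(mu < n) p mu * (\sum_(nu < n) H nu b * T mu a nu)).
  rewrite /dGmet; set S := \sum_(nu < n) H a nu * H nu b; clearbody S.
  rewrite !mulr_sumr -!big_split /=; apply: eq_bigr => mu _.
  by rewrite big_split /=; ring.
rewrite p_unit pT_first !sum_mul_suml.
have -> : \sum_(nu < n) H a nu * H nu b = Hsq a b.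
  by apply: eq_bigr => nu _; rewrite (H_sym nu b).
have -> : \sum_(nu < n) H a nu * (\sum_(mu < n) p mu * T mu nu b) = - Hcube b a.
  rewrite -sumrN; apply: eq_bigr => nu _.
  by rewrite pT_first Hsq_sym (H_sym a nu) mulrN mulrC.
have -> : \sum_(nu < n) H nu b * (\sum_(mu < n) p mu * T mu a nu) = - Hcube a b.
  by rewrite -sumrN; apply: eq_bigr => nu _; rewrite pT_first mulrN mulrC.
ring.
Qed.

Lemma christoffel_contraction a b :
  H a b - 2^-1 * \sum_(mu < n) p mu * (dGmet a mu b + dGmet b mu a - dGmet mu a b)
  = d0 * Hsq a b.
Proof.
have -> : \sum_(mu < n) p mu * (dGmet a mu b + dGmet b mu a - dGmet mu a b) =
    \sum_(mu < n) p mu * dGmet a mu b + \sum_(mu < n) p mu * dGmet b mu a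
    - \sum_(mu < n) p mu * dGmet mu a b.
  by rewrite -big_split -sumrB; apply: eq_bigr => mu _; rewrite mulrBr mulrDr.
rewrite !sum_p_dGmet_mid sum_p_dGmet_first (Hsq_sym b a).
have two_neq0 : (2 : R) != 0 by rewrite pnatr_eq0.
by field.
Qed.

End ChristoffelAlgebra.

(* No invertibility is needed: for singular [G], [invmx G = G]. *)
Lemma mulmx_invmx_fixed {R : comUnitRingType} {n} {G : 'M[R]_n} {v : 'rV[R]_n} :
  v *m G = v -> v *m invmx G = v.
Proof.
move=> vG; have [G_unit|G_sing] := boolP (G \in unitmx); first by rewrite -{1}vG mulmxK.
by rewrite invmx_out.
Qed.

Section GmetDerivative.
Context {R : realType} {m : nat}.
Variable d : 'rV[R]_m -> R.

Lemma Gmet_entry z mu b : Gmet d z mu b =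
  (1%:M : 'M[R]_m) mu b - 2 * d z * partial mu (partial b d) z
  + 2 * (d z * d z) * \sum_(nu < m) partial mu (partial nu d) z * partial nu (partial b d) z.
Proof.
rewrite /Gmet !mxE expr2; congr (_ + _ * _).
by apply: eq_bigr => nu _; rewrite !mxE.
Qed.

Lemma partial_Gmet x a mu b : differentiable d x ->
  (forall i j, differentiable (partial i (partial j d)) x) ->
  partial a (fun z => Gmet d z mu b) x =
  dGmet (fun i => partial i d x) (fun i j => partial i (partial j d) x)
    (fun k i j => partial k (partial i (partial j d)) x) (d x) a mu b.
Proof.
move=> dd dH.
pose e : 'rV[R]_m := delta_mx 0 a.
pose Hmb := partial mu (partial b d).
pose S z := \sum_(nu < m) partial mu (partial nu d) z * partial nu (partial b d) z.
pose dS := \sum_(nu < m) (partial mu (partial nu d) x * partial a (partial nu (partial b d)) x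
                         + partial nu (partial b d) x * partial a (partial mu (partial nu d)) x).
have Dd := is_derive_partial a dd.
have DS : is_derive x e S dS.
  apply: is_derive_sum_pt => nu.
  exact: is_deriveM (is_derive_partial a (dH mu nu)) (is_derive_partial a (dH nu b)).
have D : is_derive x e (fun z => 1%:M mu b - 2 * d z * Hmb z + 2 * (d z * d z) * S z)
    (0 - (2 * d x * partial a Hmb x + Hmb x * (2 * partial a d x + d x * 0))
     + (2 * (d x * d x) * dS + S x * (2 * (d x * partial a d x + d x * partial a d x)
                                      + d x * d x * 0))).
  exact: is_deriveD (is_deriveB (is_derive_cst _ x e)
      (is_deriveM (is_deriveM (is_derive_cst (2 : R) x e) Dd) (is_derive_partial a (dH mu b))))
    (is_deriveM (is_deriveM (is_derive_cst (2 : R) x e) (is_deriveM Dd Dd)) DS).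
have -> : (fun z => Gmet d z mu b)
    = fun z => 1%:M mu b - 2 * d z * Hmb z + 2 * (d z * d z) * S z.
  by apply/funext => z; exact: Gmet_entry.
rewrite {1}/partial; case: D => _ ->; rewrite /dGmet -/(S x) -/dS -/Hmb.
clear DS Dd; move: (d x) (partial a d x) (Hmb x) (partial a Hmb x) (S x) dS.
by move=> *; ring.
Qed.

End GmetDerivative.

Section HessianOfUnitGradient.
Context {R : realType} {m : nat} {O : set 'rV[R]_m} {d : 'rV[R]_m -> R}.
Hypotheses (oO : open O) (d_smooth : smooth_on O d)
  (d_unit : forall z, O z -> \sum_(i < m) partial i d z * partial i d z = 1).

Lemma gradient_mul_hess x : O x -> gradient d x *m hess d x = 0.
Proof.
move=> Ox; apply/rowP => j; rewrite !mxE -[RHS](hess_gradient_eq0 oO d_smooth d_unit j x Ox).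
by apply: eq_bigr => i _; rewrite !mxE (partialC i j oO d_smooth Ox).
Qed.

Lemma gradient_mul_Gmet x : O x -> gradient d x *m Gmet d x = gradient d x.
Proof.
move=> Ox; rewrite /Gmet mulmxDr mulmxBr mulmx1 -!scalemxAr mulmxA gradient_mul_hess //.
by rewrite mul0mx !scaler0 subr0 addr0.
Qed.

Lemma christoffel_gradient a b x : O x ->
  \sum_(c < m) christoffel d c a b x * partial c d x =
  2^-1 * \sum_(mu < m) partial mu d x *
    (partial a (fun z => Gmet d z mu b) x + partial b (fun z => Gmet d z mu a) x
     - partial mu (fun z => Gmet d z a b) x).
Proof.
move=> Ox.
have gradGinv mu : \sum_(c < m) partial c d x * invmx (Gmet d x) c mu = partial mu d x.
  have := congr1 (fun v : 'rV[R]_m => v ord0 mu)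
    (mulmx_invmx_fixed (gradient_mul_Gmet x Ox)).
  by rewrite /= !mxE => <-; apply: eq_bigr => c _; rewrite !mxE.
under eq_bigr do rewrite /christoffel -mulrA mulr_suml.
rewrite -mulr_sumr exchange_big /=; congr (_ * _); apply: eq_bigr => mu _.
by rewrite -gradGinv mulr_suml; apply: eq_bigr => c _; rewrite mulrC mulrA.
Qed.

Lemma hessG_unit_gradient a b x : O x ->
  hessG d a b x = d x * \sum_(rho < m) hess d x a rho * hess d x b rho.
Proof.
move=> Ox.
have dd := smooth_on_differentiable d_smooth Ox.
have dH i j : differentiable (partial i (partial j d)) x.
  exact: smooth_on_differentiable (smooth_on_partial i (smooth_on_partial j d_smooth)) Ox.
have E := @christoffel_contraction _ _ (fun i => partial i d x)
  (fun i j => partial i (partial j d) x) (fun k i j => partial k (partial i (partial j d)) x)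
  (d x) (fun i j => partialC i j oO d_smooth Ox)
  (fun k i j => partial_eq_on k oO Ox (fun z Oz => partialC i j oO d_smooth Oz))
  (fun k i j => partialC k i oO (smooth_on_partial j d_smooth) Ox)
  (d_unit x Ox) (fun j => hess_gradient_eq0 oO d_smooth d_unit j x Ox)
  (fun k j => partial_hess_gradient_eq0 oO d_smooth d_unit k j x Ox) a b.
rewrite /= in E; rewrite /hessG christoffel_gradient //.
under eq_bigr do rewrite !partial_Gmet //.
rewrite E /Hsq; congr (_ * _); apply: eq_bigr => rho _; by rewrite !mxE.
Qed.

End HessianOfUnitGradient.

Section EuclideanDistance.
Context {R : realType} {m : nat}.

Lemma eucl_norm_continuous : continuous (@eucl_norm R m).
Proof.
move=> z; rewrite /eucl_norm.
apply: (continuous_comp (f := fun v : 'rV[R]_m => \sum_(i < m) v ord0 i ^+ 2));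
  last exact: sqrt_continuous.
apply: differentiable_continuous.
rewrite (_ : (fun v => _) = \sum_(i < m) (fun v : 'rV[R]_m => v ord0 i) ^+ 2);
  last by rewrite fct_sumE; apply/funext => v; apply: eq_bigr.
apply: differentiable_sum => i; apply: (differentiableX 1).
exact: differentiable_coord.
Qed.

Lemma sum_sqr_eucl_norm1 (v : 'rV[R]_m) :
  eucl_norm v = 1 -> \sum_(i < m) v ord0 i * v ord0 i = 1.
Proof.
have sum_ge0 : 0 <= \sum_(i < m) v ord0 i ^+ 2 by apply: sumr_ge0 => i _; exact: sqr_ge0.
move=> /(congr1 (fun r => r ^+ 2)); rewrite sqr_sqrtr // expr1n => <-.
by apply: eq_bigr => i _; rewrite expr2.
Qed.

Lemma open_set_dist_lt (M : set 'rV[R]_m) (T : R) :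
  M !=set0 -> open [set x | set_dist x M < T].
Proof.
move=> [a0 Ma0]; rewrite openE => x /= xT.
have dists_neq0 : [set eucl_norm (x - a) | a in M] !=set0.
  by exists (eucl_norm (x - a0)), a0.
have [_ [a Ma <-] xaT] := inf_lt dists_neq0 xT.
have dist_a_cont : {for x, continuous (fun z : 'rV[R]_m => eucl_norm (z - a))}.
  apply: continuous_comp; last exact: eucl_norm_continuous.
  by apply: continuousB => //; exact: cst_continuous.
move: dist_a_cont => /cvgr_lt /(_ _ xaT); apply: filterS => z /= zaT.
apply: le_lt_trans zaT; apply: ge_inf; last by exists a.
by exists 0 => _ [b _ <-]; exact: sqrtr_ge0.
Qed.

End EuclideanDistance.

Theorem mainTheorem8 (R : realType) (n : nat) (M : set 'rV[R]_(n.+1)) (T : R)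
  (hM : closed_hypersurface M) (hMo : orientable_hypersurface M) (hT : 0 < T)
  (hsmooth : smooth_on [set x | set_dist x M < T] (sdist M))
  (hunit : forall x, set_dist x M < T -> eucl_norm (gradient (sdist M) x) = 1)
  (hdecomp : forall x, set_dist x M < T ->
     exists! a, M a /\ x = a + sdist M x *: gradient (sdist M) x)
  (k : nat) (U : set 'rV[R]_k) (hU : open U)
  (g : 'rV[R]_k -> 'M[R]_k)
  (hgsym : forall y, U y -> (g y)^T = g y)
  (hgpos : forall y, U y -> forall v : 'rV[R]_k, v != 0 -> 0 < (v *m g y *m v^T) ord0 ord0)
  (hgsmooth : forall i j, smooth_on U (fun y => g y i j))
  (f : 'rV[R]_k -> 'rV[R]_(n.+1))
  (hfN : forall y, U y -> set_dist (f y) M < T)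
  (hfdiff : forall y, U y -> differentiable f y) :
  forall y, U y ->
    \sum_(a < n.+1) \sum_(b < n.+1)
      riem_inner g y (riem_grad g (fun z => f z ord0 a) y)
                     (riem_grad g (fun z => f z ord0 b) y)
      * hessG (sdist M) a b (f y)
    =
    \sum_(a < n.+1) \sum_(b < n.+1)
      riem_inner g y (riem_grad g (fun z => f z ord0 a) y)
                     (riem_grad g (fun z => f z ord0 b) y)
      * (sdist M (f y) *
         \sum_(rho < n.+1) hess (sdist M) (f y) a rho * hess (sdist M) (f y) b rho).
Proof.
move=> y Uy.
have M_neq0 : M !=set0 by case: hM.
have d_unit z : set_dist z M < T ->
    \sum_(i < n.+1) partial i (sdist M) z * partial i (sdist M) z = 1.
  move=> /hunit /sum_sqr_eucl_norm1 <-.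
  by apply: eq_bigr => i _; rewrite mxE.
apply: eq_bigr => a _; apply: eq_bigr => b _; congr (_ * _).
exact: hessG_unit_gradient (open_set_dist_lt M T M_neq0) hsmooth d_unit a b _ (hfN y Uy).
Qed.
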